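(* Let $\mathcal{Z}\subseteq\mathbb{R}^d$ be a nonempty compact convex set, let $r:\mathcal{Z}\to\mathbb{R}$ be convex and differentiable on $\mathcal{Z}$, and let $\Theta\ge \max_{z\in\mathcal{Z}} r(z)-\min_{z\in\mathcal{Z}} r(z)$. Let $g:\mathcal{Z}\to\mathbb{R}^d$ and let $z^\star\in\mathcal{Z}$ satisfy $\langle g(z^\star), z^\star-z\rangle\le 0$ for all $z\in\mathcal{Z}$. Let $\nu>0$, $\alpha>0$, $\varepsilon\ge 0$ and $K\in\mathbb{N}$. Suppose $g$ is $\nu$-strongly monotone with respect to $r$, i.e. $\langle g(w)-g(z),w-z\rangle\ge \nu\langle \nabla r(w)-\nabla r(z),w-z\rangle$ for all $w,z\in\mathcal{Z}$. Let $z_0\in\operatorname{argmin}_{z\in\mathcal{Z}} r(z)$, and for $k=1,\dots,K$ let $z_{k-1/2},z_k\in\mathcal{Z}$ be any points satisfying, for all $w\in\mathcal{Z}$, $$\big\langle g(z_{k-1})+\alpha\big(\nabla r(z_{k-1/2})-\nabla r(z_{k-1})\big),\, z_{k-1/2}-w\big\rangle\le \tfrac{\varepsilon}{2},$$ $$\big\langle g(z_{k-1/2})+\alpha\big(\nabla r(z_{k})-\nabla r(z_{k-1})\big)+\nu\big(\nabla r(z_{k})-\nabla r(z_{k-1/2})\big),\, z_{k}-w\big\rangle\le \tfrac{\varepsilon}{2}.$$ Suppose moreover that for every $k\in[K]$ the relative Lipschitz condition $$\langle g(z_{k-1/2})-g(z_{k-1}),\,z_{k-1/2}-z_k\rangle\le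 \alpha\big(V_{z_{k-1/2}}(z_k)+V_{z_{k-1}}(z_{k-1/2})\big)$$ holds. Then $$V_{z_K}(z^\star)\le \Big(\frac{\alpha}{\nu+\alpha}\Big)^K\Theta+\frac{\varepsilon}{\nu}.$$
   Context: For a differentiable convex function $r$, its Bregman divergence is $V_{z'}(z):=V^r_{z'}(z)=r(z)-r(z')-\langle\nabla r(z'),z-z'\rangle\ge 0$. The two displayed conditions say that $z_{k-1/2}$ (resp. $z_k$) is an $\frac{\varepsilon}{2}$-approximate solution of $\min_{z\in\mathcal{Z}}\{\langle g(z_{k-1}),z\rangle+\alpha V_{z_{k-1}}(z)\}$ (resp. $\min_{z\in\mathcal{Z}}\{\langle g(z_{k-1/2}),z\rangle+\alpha V_{z_{k-1}}(z)+\nu V_{z_{k-1/2}}(z)\}$), where $z'$ is an $\varepsilon$-approximate solution of $\min_{\mathcal{Z}} F$ if $\langle\nabla F(z'),z'-w\rangle\le\varepsilon$ for all $w\in\mathcal{Z}$. *)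

From HB Require Import structures.
From mathcomp Require Import all_boot all_order all_algebra.
From mathcomp Require Import all_classical all_reals all_analysis.
Set Implicit Arguments. Unset Strict Implicit. Unset Printing Implicit Defensive.
Import Order.TTheory GRing.Theory Num.Theory.
Import numFieldNormedType.Exports.
Local Open Scope classical_set_scope.
Local Open Scope ring_scope.

Definition dotp {R : realType} {d : nat} (u v : 'rV[R]_d) : R :=
  \sum_(i < d) u ord0 i * v ord0 i.

Definition convex_on {R : realType} {d : nat} (Z : set 'rV[R]_d)
  (r : 'rV[R]_d -> R) : Prop :=
  forall x y, Z x -> Z y -> forall t : R, 0 <= t <= 1 ->
    r (t *: x + (1 - t) *: y) <= t * r x + (1 - t) * r y.

Definition gradient_on {R : realType} {d : nat} (Z : set 'rV[R]_d)
  (r : 'rV[R]_d -> R) (gr : 'rV[R]_d -> 'rV[R]_d) : Prop :=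
  forall z, Z z -> differentiable r z /\ forall h, 'd r z h = dotp (gr z) h.

(* Bregman divergence V_{z'}(z) = r z - r z' - <grad r z', z - z'>. *)
Definition breg {R : realType} {d : nat} (r : 'rV[R]_d -> R)
  (gr : 'rV[R]_d -> 'rV[R]_d) (z' z : 'rV[R]_d) : R :=
  r z - r z' - dotp (gr z') (z - z').

(* The analysis rests on the Bregman three-point identity
   <grad r b - grad r a, b - s> = V_b(s) + V_a(b) - V_a(s).
   Testing the extragradient conditions at w = z_k and w = zstar, adding the
   relative Lipschitz bound, strong monotonicity and the variational
   inequality at zstar, all cross terms cancel and what remains is the
   contraction (alpha + nu) V_{z_k}(zstar) <= alpha V_{z_{k-1}}(zstar) + eps, the
   Bregman divergences V_{zstar}(z_{k-1/2}) and V_{z_{k-1/2}}(z_k) being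
   nonnegative by convexity of r.  Iterating from V_{z_0}(zstar) <= Theta,
   which holds by first-order optimality of z_0, gives the bound. *)
From HB Require Import structures.
From mathcomp Require Import all_boot all_order all_algebra.
From mathcomp Require Import all_classical all_reals all_analysis.
From mathcomp Require Import ring lra.

Set Implicit Arguments.
Unset Strict Implicit.
Unset Printing Implicit Defensive.

Import Order.TTheory GRing.Theory Num.Theory.
Import numFieldNormedType.Exports.
Local Open Scope classical_set_scope.
Local Open Scope ring_scope.

Section DirectionalBounds.
Variables (R : realType) (d : nat).

Lemma diff_le_diffquot (f : 'rV[R]_d -> R) (x v : 'rV[R]_d) (c : R) :
  differentiable f x ->
  (forall t : R, 0 < t -> t <= 1 -> t^-1 * (f (t *: v + x) - f x) <= c) ->
  'd f x v <= c.
Proof.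
move=> df quot_le; rewrite -deriveE //.
set q := fun h : R => h^-1 *: ((f \o shift x) (h *: v) - f x).
have q_cvg : q @ 0^' --> 'D_v f x := @diff_derivable _ _ _ f x v df.
rewrite leNgt; apply/negP => c_lt.
have near_gt : nbhs (0 : R) (fun t => t != 0 -> c < q t).
  exact: (@cvgr_gt _ _ _ (dnbhs_filter 0) _ _ q_cvg _ c_lt).
have right_gt_q : \forall t \near 0^'+, c < q t.
  move/nbhs_ballP: near_gt => [e e0 He].
  by exists e => //= y ye /gt_eqF/negbT/He; exact.
have right_gt : \forall t \near 0^'+, [/\ 0 < t, t <= 1 & c < q t].
  near=> t; split.
  - by near: t; exact: nbhs_right_gt.
  - by near: t; apply: nbhs_right_le; exact: ltr01.
  - by near: t; exact: right_gt_q.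
have [t [t0 t1]] := filter_ex right_gt.
by apply/negP; rewrite -leNgt; exact: quot_le.
Unshelve. all: by end_near.
Qed.

Lemma diff_ge_diffquot (f : 'rV[R]_d -> R) (x v : 'rV[R]_d) (c : R) :
  differentiable f x ->
  (forall t : R, 0 < t -> t <= 1 -> c <= t^-1 * (f (t *: v + x) - f x)) ->
  c <= 'd f x v.
Proof.
move=> df quot_ge; rewrite -[leRHS]opprK lerNr.
have -> : - 'd f x v = 'd (- f) x v by rewrite diffN.
apply: diff_le_diffquot; first exact: differentiableN.
move=> t t0 t1; rewrite !fctE opprK addrC -opprB mulrN lerN2.
exact: quot_ge.
Qed.

End DirectionalBounds.

Section Dotp.
Variables (R : realType) (d : nat).
Implicit Types u v w : 'rV[R]_d.

Lemma dotpDl u v w : dotp (u + v) w = dotp u w + dotp v w.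
Proof. by rewrite /dotp -big_split; apply: eq_bigr => i _; rewrite mxE mulrDl. Qed.
Lemma dotpDr u v w : dotp w (u + v) = dotp w u + dotp w v.
Proof. by rewrite /dotp -big_split; apply: eq_bigr => i _; rewrite mxE mulrDr. Qed.
Lemma dotpNl u w : dotp (- u) w = - dotp u w.
Proof. by rewrite /dotp -sumrN; apply: eq_bigr => i _; rewrite mxE mulNr. Qed.
Lemma dotpNr u w : dotp w (- u) = - dotp w u.
Proof. by rewrite /dotp -sumrN; apply: eq_bigr => i _; rewrite mxE mulrN. Qed.
Lemma dotpZl (a : R) u w : dotp (a *: u) w = a * dotp u w.
Proof. by rewrite /dotp mulr_sumr; apply: eq_bigr => i _; rewrite mxE mulrA. Qed.
Lemma dotpZr (a : R) u w : dotp w (a *: u) = a * dotp w u.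
Proof. by rewrite /dotp mulr_sumr; apply: eq_bigr => i _; rewrite mxE mulrCA. Qed.

Definition dotpE := (dotpDl, dotpDr, dotpNl, dotpNr, dotpZl, dotpZr).

End Dotp.

Section BregmanIdentities.
Variables (R : realType) (d : nat).
Variables (r : 'rV[R]_d -> R) (gr : 'rV[R]_d -> 'rV[R]_d).
Local Notation V := (breg r gr).

Lemma bregxx a : V a a = 0.
Proof.
rewrite /breg (subrr (r a)) (subrr a) /dotp big1 ?subrr // => i _.
by rewrite mxE mulr0.
Qed.

Lemma breg_three_point a b s :
  dotp (gr b - gr a) (b - s) = V b s + V a b - V a s.
Proof. by rewrite /breg !dotpE; ring. Qed.

(* The first-order conditions are tested at w = b for the half step and at
   w = s for the full step; the relative Lipschitz bound absorbs the
   divergences V_h(b) + V_a(h) created by the half step. *)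
Lemma extragradient_contraction (g : 'rV[R]_d -> 'rV[R]_d) (nu alpha eps : R)
    (a h b s : 'rV[R]_d) :
  dotp (g a + alpha *: (gr h - gr a)) (h - b) <= eps / 2 ->
  dotp (g h + alpha *: (gr b - gr a) + nu *: (gr b - gr h)) (b - s) <= eps / 2 ->
  dotp (g h - g a) (h - b) <= alpha * (V h b + V a h) ->
  nu * dotp (gr h - gr s) (h - s) <= dotp (g h - g s) (h - s) ->
  dotp (g s) (s - h) <= 0 ->
  0 <= nu -> 0 <= V s h -> 0 <= V h b ->
  (alpha + nu) * V b s <= alpha * V a s + eps.
Proof.
move=> half_step full_step lip strong_mono vi nu_ge0 Vsh_ge0 Vhb_ge0.
rewrite dotpDl dotpZl breg_three_point in half_step.
rewrite !dotpDl !dotpZl !breg_three_point in full_step.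
rewrite breg_three_point bregxx subr0 in strong_mono.
have split_h : dotp (g h) (h - s) = dotp (g h) (h - b) + dotp (g h) (b - s).
  by rewrite !dotpE; ring.
have flip_s : dotp (g s) (h - s) = - dotp (g s) (s - h).
  by rewrite -dotpNr opprB.
move: lip strong_mono; rewrite !(dotpDl, dotpNl) split_h flip_s => lip strong_mono.
nra.
Qed.

End BregmanIdentities.

Section BregmanConvex.
Variables (R : realType) (d : nat) (Z : set 'rV[R]_d).
Variables (r : 'rV[R]_d -> R) (gr : 'rV[R]_d -> 'rV[R]_d).
Hypothesis grad_r : gradient_on Z r gr.
Local Notation V := (breg r gr).

Let segment_shift (t : R) (x y : 'rV[R]_d) :
  t *: (y - x) + x = t *: y + (1 - t) *: x.
Proof. by rewrite scalerBr scalerBl scale1r -addrA [_ + x]addrC. Qed.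

Lemma breg_ge0 x y : convex_on Z r -> Z x -> Z y -> 0 <= V x y.
Proof.
move=> convex_r Zx Zy; have [dr dr_gr] := grad_r Zx.
rewrite /breg -dr_gr subr_ge0; apply: diff_le_diffquot => // t t0 t1.
have := convex_r y x Zy Zx t; rewrite (ltW t0) t1 segment_shift => /(_ isT) cvx.
have -> : r y - r x = t^-1 * (t * (r y - r x)) by rewrite mulKf ?gt_eqF.
by apply: ler_wpM2l; [rewrite invr_ge0 ltW | lra].
Qed.

Lemma argmin_first_order {z0 w} : convex_set Z -> Z z0 ->
  (forall u, Z u -> r z0 <= r u) -> Z w -> 0 <= dotp (gr z0) (w - z0).
Proof.
move=> convex_Z Zz0 z0_min Zw; have [dr dr_gr] := grad_r Zz0.
rewrite -dr_gr; apply: diff_ge_diffquot => // t t0 t1.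
apply: mulr_ge0; first by rewrite invr_ge0 ltW.
rewrite subr_ge0 segment_shift; apply: z0_min.
by have := convex_Z w z0 (Itv01 (ltW t0) t1); rewrite !inE; apply.
Qed.

Lemma breg_argmin_le {z0 w} : convex_set Z -> Z z0 ->
  (forall u, Z u -> r z0 <= r u) -> Z w -> V z0 w <= r w - r z0.
Proof.
move=> convex_Z Zz0 z0_min Zw.
have := argmin_first_order convex_Z Zz0 z0_min Zw; rewrite /breg; lra.
Qed.

End BregmanConvex.

Lemma geometric_recurrence_le (R : realFieldType) (alpha nu eps Theta : R)
  (u : nat -> R) (K : nat) :
  0 < alpha -> 0 < nu -> 0 <= eps -> u 0%N <= Theta ->
  (forall k, (k < K)%N -> (alpha + nu) * u k.+1 <= alpha * u k + eps) ->
  u K <= (alpha / (nu + alpha)) ^+ K * Theta + eps / nu.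
Proof.
move=> alpha0 nu0 eps0 u0_le step.
suff: forall k, (k <= K)%N -> u k <= (alpha / (nu + alpha)) ^+ k * Theta + eps / nu.
  exact.
elim=> [_|k IH lt_kK]; first by rewrite expr0 mul1r (le_trans u0_le) // lerDl divr_ge0 // ltW.
have sum_gt0 : 0 < alpha + nu by lra.
rewrite -(ler_pM2l sum_gt0); apply: le_trans (step _ lt_kK) _.
set P := (alpha / (nu + alpha)) ^+ k * Theta in IH *.
have -> : (alpha + nu) * ((alpha / (nu + alpha)) ^+ k.+1 * Theta + eps / nu)
    = alpha * (P + eps / nu) + eps by rewrite /P exprS; field; lra.
by rewrite lerD2r; apply: ler_wpM2l; [exact: ltW | exact/IH/ltnW].
Qed.

Theorem mainTheorem1 (R : realType) (d : nat) (Z : set 'rV[R]_d)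
  (r : 'rV[R]_d -> R) (gr : 'rV[R]_d -> 'rV[R]_d) (Theta : R)
  (g : 'rV[R]_d -> 'rV[R]_d) (zstar : 'rV[R]_d)
  (nu alpha eps : R) (K : nat) (zh z : nat -> 'rV[R]_d) :
  Z !=set0 -> compact Z -> convex_set Z ->
  convex_on Z r -> gradient_on Z r gr ->
  (forall u v, Z u -> Z v -> r u - r v <= Theta) ->
  Z zstar -> (forall w, Z w -> dotp (g zstar) (zstar - w) <= 0) ->
  0 < nu -> 0 < alpha -> 0 <= eps ->
  (forall w v, Z w -> Z v ->
     dotp (g w - g v) (w - v) >= nu * dotp (gr w - gr v) (w - v)) ->
  Z (z 0%N) -> (forall w, Z w -> r (z 0%N) <= r w) ->
  (forall k, (1 <= k <= K)%N ->
     [/\ Z (zh k), Z (z k),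
       (forall w, Z w ->
          dotp (g (z k.-1) + alpha *: (gr (zh k) - gr (z k.-1))) (zh k - w)
            <= eps / 2),
       (forall w, Z w ->
          dotp (g (zh k) + alpha *: (gr (z k) - gr (z k.-1))
                 + nu *: (gr (z k) - gr (zh k))) (z k - w) <= eps / 2) &
       dotp (g (zh k) - g (z k.-1)) (zh k - z k)
         <= alpha * (breg r gr (zh k) (z k) + breg r gr (z k.-1) (zh k))]) ->
  breg r gr (z K) zstar <= (alpha / (nu + alpha)) ^+ K * Theta + eps / nu.
Proof.
move=> _ _ convex_Z convex_r grad_r Theta_ge Zzstar vi_zstar nu0 alpha0 eps0
  strong_mono Zz0 z0_min iterates.
apply: (geometric_recurrence_le (u := fun k => breg r gr (z k) zstar)) => //.
  exact: le_trans (breg_argmin_le grad_r convex_Z Zz0 z0_min Zzstar) (Theta_ge _ _ Zzstar Zz0).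
move=> k lt_kK; have /iterates[Zzh Zz half_step full_step lip] : (1 <= k.+1 <= K)%N by [].
exact: extragradient_contraction (half_step _ Zz) (full_step _ Zzstar) lip
  (strong_mono _ _ Zzh Zzstar) (vi_zstar _ Zzh) (ltW nu0)
  (breg_ge0 grad_r convex_r Zzstar Zzh) (breg_ge0 grad_r convex_r Zzh Zz).
Qed.
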